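(* Let $\mu$ be a probability measure on $\{0,1\}^{\mathbb{N}}$, $X\sim\mu$, and for $i,j\in\mathbb{N}$ let $p_i=\mathbb{E}[X_i]$ and $r_{ij}=\mathbb{E}[X_iX_j]$. Then for all $i,j\in\mathbb{N}$ and all $t\ge0$, $$\mathbb{E}\exp\left\{t\left[(X_i-p_i)-(X_j-p_j)\right]\right\}\le\exp\left(\frac{t^2}{\log\frac{2}{p_i+p_j-2r_{ij}}}\right).$$
   Context: When $p_i+p_j-2r_{ij}=0$, the right-hand side is interpreted as $\exp(0)=1$. *)

From HB Require Import structures.
From mathcomp Require Import all_boot all_order all_algebra.
From mathcomp Require Import all_classical all_reals all_analysis.
Set Implicit Arguments. Unset Strict Implicit. Unset Printing Implicit Defensive.
Import Order.TTheory GRing.Theory Num.Theory.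
Local Open Scope classical_set_scope.
Local Open Scope ring_scope.

(* The product sigma-algebra on {0,1}^N = nat -> bool: generated by the
   coordinate cylinders {w | w i = true}, i in N. *)
Definition coord_cyl : set (set (nat -> bool)) :=
  [set [set w : nat -> bool | w i] | i in [set: nat]].

Definition cantor := g_sigma_algebraType coord_cyl.

Definition X {R : realType} (i : nat) (w : cantor) : R := (w i)%:R.

(* p_i = E[X_i], r_ij = E[X_i X_j] (finite since X_i is bounded). *)
Definition pE {R : realType} (mu : probability cantor R) (i : nat) : R :=
  fine ('E_mu[X i])%E.
Definition rE {R : realType} (mu : probability cantor R) (i j : nat) : R :=
  fine ('E_mu[X i \* X j])%E.

(* exp(t^2 / log(2/q)), with the convention that it equals exp(0) = 1
   when q = 0. *)
Definition subg_bound {R : realType} (t q : R) : R :=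
  if q == 0 then 1 else expR (t ^+ 2 / ln (2 / q)).

(* Let a = P(X_i = 1, X_j = 0) and b = P(X_i = 0, X_j = 1).  The difference
   D = (X_i - p_i) - (X_j - p_j) takes the values 1, -1, 0 shifted by -(a - b),
   with probabilities a, b, 1 - a - b, and q := p_i + p_j - 2 r_ij = a + b; so the
   claim bounds the moment generating function of a three-point law.  Write
   q = 2 exp(-L), i.e. L = log(2/q).  For t <= L + 1/2, 1 + x <= e^x together
   with sinh t >= t gives E e^{tD} <= exp(q (e^t - 1 - t)); since
   (e^x - 1 - x)/x^2 is increasing it suffices to check t = L + 1/2, an
   inequality in L alone.  For t >= L + 1/2, discarding the b-term and using
   y <= e^(y - 1) gives E e^{tD} <= exp(t (1 + q) + e^(-t) - 1), which is at most
   t^2/L because e^(-t) <= q/3 and q (2L + 1/2) <= 2. *)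

From HB Require Import structures.
From mathcomp Require Import all_boot all_order all_algebra.
From mathcomp Require Import all_classical all_reals all_analysis.
From mathcomp Require Import measurable_realfun ring lra.
Set Implicit Arguments.
Unset Strict Implicit.
Unset Printing Implicit Defensive.
Import Order.TTheory GRing.Theory Num.Theory.
Import numFieldNormedType.Exports.
Local Open Scope classical_set_scope.
Local Open Scope ring_scope.

Section ExpBounds.
Variable R : realType.
Implicit Types a b l t x y L T : R.

Lemma series_exp_coeff_sub1D x n :
  series (exp_coeff x) n.+2 - 1 - x = \sum_(2 <= k < n.+2) exp_coeff x k.
Proof.
rewrite /series /= (big_ltn (_ : (0 < n.+2)%N)) // (big_ltn (_ : (1 < n.+2)%N)) // !exp_coeffE /=.
by rewrite expr0 expr1 invr1 !mul1r; lra.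
Qed.

Lemma expR_sub1D_le x y c :
  (forall k, (2 <= k)%N -> exp_coeff x k <= c * exp_coeff y k) ->
  expR x - 1 - x <= c * (expR y - 1 - y).
Proof.
move=> le_coeff.
have cvg_sub1D (z : R) : series (exp_coeff z) n - 1 - z @[n --> \oo] --> expR z - 1 - z.
  by apply: cvgB; [apply: cvgB|]; [exact: is_cvg_series_exp_coeff| |]; exact: cvg_cst.
have cvg_y : c * (series (exp_coeff y) n - 1 - y) @[n --> \oo] -->
    c * (expR y - 1 - y).
  by apply: cvgM; [exact: cvg_cst | exact: cvg_sub1D].
apply: ler_cvg_to (cvg_sub1D x) cvg_y _.
near=> n; have [m ->] : exists m, n = m.+2.
  by exists n.-2; near: n; exists 2%N => // -[|[|]].
rewrite !series_exp_coeff_sub1D mulr_sumr.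
by apply: ler_sum_nat => k /andP[k2 _]; exact: le_coeff.
Unshelve. all: by end_near.
Qed.

Lemma expR_sub_expRN_ge2x x : 0 <= x -> 2 * x <= expR x - expR (- x).
Proof.
move=> x0; suff : expR (- x) - 1 - - x <= 1 * (expR x - 1 - x) by lra.
apply: expR_sub1D_le => k _; rewrite mul1r !exp_coeffE /= ler_wpM2l //.
by rewrite (le_trans (ler_norm _)) // normrX normrN ger0_norm.
Qed.

Lemma expR_sub1D_scale l T : 0 <= l <= 1 -> 0 <= T ->
  expR (l * T) - 1 - l * T <= l ^+ 2 * (expR T - 1 - T).
Proof.
move=> /andP[l0 l1] T0; apply: expR_sub1D_le => k k2.
rewrite !exp_coeffE /= exprMn mulrCA.
by apply: ler_wpM2r; rewrite ?mulr_ge0 ?exprn_ge0 ?ler_wiXn2l.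
Qed.

Lemma expR_1_8_le : expR (1 / 8 : R) <= 8 / 7.
Proof.
have := expR_ge1Dx (- (1 / 8) : R); rewrite expRN.
have := expR_gt0 (1 / 8 : R); move: (expR _) => e e0.
move=> /(ler_wpM2l (ltW e0)); rewrite mulfV ?gt_eqF //; lra.
Qed.

Lemma expR_1_2_le : expR (1 / 2 : R) <= 4096 / 2401.
Proof.
rewrite (_ : 1 / 2 = 4%:R * (1 / 8)); last by rewrite -[4%:R]/(4 : R); field.
rewrite expRM_natl; apply: (@le_trans _ _ ((8 / 7) ^+ 4)).
- by apply: lerXn2r; rewrite ?nnegrE ?expR_ge0 ?expR_1_8_le //; lra.
- by rewrite !exprS expr0; lra.
Qed.

Lemma expR_3_2_le : expR (3 / 2 : R) <= 5.
Proof.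
rewrite (_ : 3 / 2 = 12%:R * (1 / 8)); last by rewrite -[12%:R]/(12 : R); field.
rewrite expRM_natl; apply: (@le_trans _ _ ((8 / 7) ^+ 12)).
- by apply: lerXn2r; rewrite ?nnegrE ?expR_ge0 ?expR_1_8_le //; lra.
- by rewrite !exprS expr0; lra.
Qed.

Lemma expR_3_4_ge : 2 <= expR (3 / 4 : R).
Proof.
rewrite (_ : 3 / 4 = 8%:R * (3 / 32)); last by rewrite -[8%:R]/(8 : R); field.
rewrite expRM_natl; apply: (@le_trans _ _ ((35 / 32) ^+ 8)).
- by rewrite !exprS expr0; lra.
- apply: lerXn2r; rewrite ?nnegrE ?expR_ge0 //;
  by have := expR_ge1Dx (3 / 32 : R); lra.
Qed.

Lemma subg_exponent_endpoint L : 0 < L ->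
  L * (2 * expR (- L) * (expR (L + 1 / 2) - 1 - (L + 1 / 2))) <= (L + 1 / 2) ^+ 2.
Proof.
move=> L0; set q := 2 * expR (- L); set T := L + 1 / 2.
have q0 : 0 <= q by rewrite mulr_ge0 ?expR_ge0.
have qeT : q * expR T = 2 * expR (1 / 2) by rewrite -mulrA -expRD addrA addNr add0r.
have -> : q * (expR T - 1 - T) = 2 * expR (1 / 2) - q * (1 + T) by rewrite -qeT; ring.
(* The tangent line of [2 expR (- L)] at [L = 3/2], using [expR (- (3/2)) >= 1/5]. *)
have q_ge : L <= 5 / 2 -> 2 / 5 * (5 / 2 - L) <= q.
  move=> L52; have := expR_ge1Dx (- (L - 3 / 2)).
  have : 1 / 5 <= expR (- (3 / 2) : R).
    by rewrite expRN div1r lef_pV2 ?posrE ?expR_gt0 ?expR_3_2_le //; lra.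
  have -> : q = 2 * expR (- (3 / 2)) * expR (- (L - 3 / 2)).
    by rewrite -mulrA -expRD; congr (2 * expR _); ring.
  by have := expR_ge0 (- (L - 3 / 2)); nra.
have le_eh : L * (2 * expR (1 / 2)) <= L * (2 * (4096 / 2401)).
  by rewrite ler_wpM2l ?ler_wpM2l ?expR_1_2_le //; lra.
have [L_le|L_gt] := leP L (12 / 5); last by rewrite /T; nra.
have le_qT : L * (2 / 5 * (5 / 2 - L) * (1 + T)) <= L * (q * (1 + T)).
  by rewrite ler_wpM2l ?ler_wpM2r ?q_ge /T //; lra.
have : 0 <= (12 / 5 - L) * (L - 1 / 2) ^+ 2 by rewrite mulr_ge0 ?sqr_ge0 //; lra.
by rewrite /T; nra.
Qed.

Lemma subg_exponent_small L t : 0 < L -> 0 <= t <= L + 1 / 2 ->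
  2 * expR (- L) * (expR t - 1 - t) <= t ^+ 2 / L.
Proof.
move=> L0 /andP[t0 tT]; set T := L + 1 / 2; have T0 : 0 < T by rewrite /T; lra.
set l := t / T; have lT : l * T = t by rewrite /l divfK // gt_eqF.
have l01 : 0 <= l <= 1 by rewrite divr_ge0 ?ler_pdivrMr ?mul1r // ltW.
have q0 : 0 <= 2 * expR (- L) by rewrite mulr_ge0 ?expR_ge0.
have := expR_sub1D_scale l01 (ltW T0); rewrite lT => /(ler_wpM2l q0) le_scale.
apply: (le_trans le_scale); clearbody l; rewrite -lT exprMn -[X in _ <= X]mulrA mulrCA.
apply: ler_wpM2l; first exact: sqr_ge0.
by rewrite ler_pdivlMr // mulrC subg_exponent_endpoint.
Qed.

Lemma subg_exponent_large L t : 0 < L -> L + 1 / 2 <= t ->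
  t * (1 + 2 * expR (- L)) + expR (- t) - 1 <= t ^+ 2 / L.
Proof.
move=> L0 Tt; set q := 2 * expR (- L).
have q0 : 0 <= q by rewrite mulr_ge0 ?expR_ge0.
have qL : q * (2 * L + 1 / 2) <= 2.
  have qeL : q * expR L = 2 by rewrite -mulrA -expRD addNr expR0 mulr1.
  rewrite -[X in _ <= X]qeL; apply: ler_wpM2l => //.
  have -> : expR L = expR (3 / 4) * expR (L - 3 / 4) by rewrite -expRD; congr expR; ring.
  by have := expR_3_4_ge; have := expR_ge1Dx (L - 3 / 4); have := expR_ge0 (L - 3 / 4); nra.
have et : expR (- t) <= q / 3.
  have eh : expR (- (1 / 2)) <= 2 / 3 :> R.
    have := expR_ge1Dx (1 / 2 : R).
    by rewrite expRN -[2 / 3 : R]invf_div lef_pV2 ?posrE ?expR_gt0 //; lra.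
  apply: (@le_trans _ _ (expR (- L) * expR (- (1 / 2)))).
    by rewrite -expRD ler_expR; lra.
  by rewrite /q; have := expR_gt0 (- L); nra.
rewrite ler_pdivlMr // mulrC.
have qL_quad : q * L * (L + 5 / 6) <= 3 / 2 * L + 1 / 4.
  have : q * (2 * L + 1 / 2) * (L + 5 / 6) * L <= 2 * (L + 5 / 6) * L.
    by rewrite ler_wpM2r ?ler_wpM2r //; lra.
  by have := sqr_ge0 (L - 5 / 24); nra.
have : 0 <= (t - (L + 1 / 2)) * (t + 1 / 2 - L * q) by rewrite mulr_ge0 //; nra.
nra.
Qed.

Definition ternary_mgf a b t :=
  expR (- (t * (a - b))) * (1 - (a + b) + a * expR t + b * expR (- t)).

Lemma ternary_mgf_le_small a b t : 0 <= a -> 0 <= b -> 0 <= t ->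
  ternary_mgf a b t <= expR ((a + b) * (expR t - 1 - t)).
Proof.
move=> a0 b0 t0; set e := a * (expR t - 1) + b * (expR (- t) - 1).
have : 1 - (a + b) + a * expR t + b * expR (- t) <= expR e.
  by have := expR_ge1Dx e; rewrite /e; lra.
move=> /(ler_wpM2l (expR_ge0 (- (t * (a - b))))) /le_trans; apply.
rewrite -expRD ler_expR /e.
by have := expR_sub_expRN_ge2x t0; nra.
Qed.

Lemma ternary_mgf_le_large a b t : 0 <= a -> 0 <= b -> 0 <= t ->
  ternary_mgf a b t <= expR (t * (1 + (a + b)) + expR (- t) - 1).
Proof.
move=> a0 b0 t0; set y := 1 + a * (expR t - 1).
have eNt1 : expR (- t) <= 1 by rewrite expR_le1 oppr_le0.
have eMeN : expR t * expR (- t) = 1 by rewrite expRxMexpNx_1.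
have le_y : 1 - (a + b) + a * expR t + b * expR (- t) <= y by rewrite /y; nra.
have : y * expR (- t) <= expR (y * expR (- t) - 1).
  by have := expR_ge1Dx (y * expR (- t) - 1); lra.
move=> /(ler_wpM2l (expR_ge0 t)); rewrite mulrCA eMeN mulr1 => /(le_trans le_y).
move=> /(ler_wpM2l (expR_ge0 (- (t * (a - b))))) /le_trans; apply.
rewrite mulrA -!expRD ler_expR /y mulrDl mul1r -mulrA mulrBl eMeN mul1r.
by have := expR_ge1Dx (- t); nra.
Qed.

Lemma ternary_mgf_le_subg_bound a b t : 0 <= a -> 0 <= b -> a + b < 2 -> 0 <= t ->
  ternary_mgf a b t <= subg_bound t (a + b).
Proof.
move=> a0 b0 q2 t0; rewrite /subg_bound; have [q0|qn0] := eqVneq (a + b) 0.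
  have [-> ->] : a = 0 /\ b = 0 by split; lra.
  by rewrite /ternary_mgf !(subrr, mul0r, mulr0, oppr0, addr0, subr0, expR0, mulr1).
have qp : 0 < a + b by rewrite lt_def qn0; lra.
set L := ln (2 / (a + b)).
have L0 : 0 < L by rewrite ln_gt0 // ltr_pdivlMr // mul1r.
have qE : 2 * expR (- L) = a + b.
  by rewrite expRN lnK ?posrE ?divr_gt0 // invf_div mulrC divfK // gt_eqF.
have [tT|Tt] := leP t (L + 1 / 2).
- apply: (le_trans (ternary_mgf_le_small a0 b0 t0)); rewrite ler_expR -qE.
  by apply: subg_exponent_small; rewrite ?t0.
- apply: (le_trans (ternary_mgf_le_large a0 b0 t0)); rewrite ler_expR -qE.
  exact: subg_exponent_large (ltW Tt).
Qed.

End ExpBounds.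

Section PairDistribution.
Variables (R : realType) (mu : probability cantor R) (i j : nat).

Definition coord_event (k : nat) (x : bool) : set cantor := [set w | w k = x].

Lemma measurable_coord_event k x : measurable (coord_event k x).
Proof.
have mT : measurable (coord_event k true) by apply: sub_gen_smallest; exists k.
case: x => //; rewrite (_ : coord_event k false = ~` coord_event k true).
  exact: measurableC.
by apply/seteqP; split => w; rewrite /coord_event /=; case: (w k).
Qed.

Definition pair_event x y := coord_event i x `&` coord_event j y.

Lemma measurable_pair_event x y : measurable (pair_event x y).
Proof. exact: measurableI (measurable_coord_event _ _) (measurable_coord_event _ _). Qed.

Lemma indic_pair_event x y w :
  \1_(pair_event x y) w = ((w i == x) && (w j == y))%:R :> R.
Proof.
rewrite indicE; congr ((nat_of_bool _)%:R).
apply/idP/andP => [/set_mem[-> ->] | [/eqP wi /eqP wj]]; first by rewrite !eqxx.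
exact: mem_set.
Qed.

Definition pair_prob x y : R := fine (mu (pair_event x y)).

Lemma pair_prob_ge0 x y : 0 <= pair_prob x y.
Proof. by rewrite fine_ge0. Qed.

Lemma expectation_pair (v : bool -> bool -> R) : (forall x y, 0 <= v x y) ->
  ('E_mu[fun w => v (w i) (w j)] =
   (\sum_(x : bool) \sum_(y : bool) v x y * pair_prob x y)%:E)%E.
Proof.
move=> v0; have split_v w :
    v (w i) (w j) = \sum_(x : bool) \sum_(y : bool) v x y * \1_(pair_event x y) w.
  by rewrite !big_bool !indic_pair_event; case: (w i); case: (w j) => /=; lra.
rewrite unlock; under eq_integral do rewrite split_v pair_bigA -sumEFin.
rewrite ge0_integral_sum //; last 2 first.
- move=> xy; apply/measurable_EFinP; apply: measurable_funM.
    exact: measurable_cst.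
  apply: measurable_indic; exact: measurable_pair_event.
- by move=> xy w _; rewrite lee_fin mulr_ge0.
rewrite pair_bigA -sumEFin; apply: eq_bigr => xy _.
under eq_integral do rewrite EFinM.
rewrite ge0_integralZl_EFin //.
- rewrite integral_indic ?setIT //; last exact: measurable_pair_event.
  by rewrite EFinM /pair_prob fineK // fin_num_measure //; exact: measurable_pair_event.
apply/measurable_EFinP; apply: measurable_indic; exact: measurable_pair_event.
Qed.

Lemma pE_pair_fst : pE mu i = pair_prob true true + pair_prob true false.
Proof.
rewrite /pE (@expectation_pair (fun x _ => x%:R) (fun _ _ => ler0n _ _)).
by rewrite /= !big_bool /= !(mul1r, mul0r, addr0).
Qed.

Lemma pE_pair_snd : pE mu j = pair_prob true true + pair_prob false true.
Proof.
rewrite /pE (@expectation_pair (fun _ y => y%:R) (fun _ _ => ler0n _ _)).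
by rewrite /= !big_bool /= !(mul1r, mul0r, addr0, add0r).
Qed.

Lemma rE_pair : rE mu i j = pair_prob true true.
Proof.
have v_ge0 x y : 0 <= x%:R * y%:R :> R by rewrite mulr_ge0 ?ler0n.
rewrite /rE (@expectation_pair (fun x y => x%:R * y%:R) v_ge0).
by rewrite /= !big_bool /= !(mul1r, mul0r, addr0).
Qed.

Lemma sum_pair_prob :
  pair_prob true true + pair_prob true false + pair_prob false true
  + pair_prob false false = 1.
Proof.
have := @expectation_pair (fun _ _ => 1) (fun _ _ => ler01).
by rewrite expectation_cst !big_bool /= !mul1r !addrA => -[].
Qed.

End PairDistribution.

Theorem lemma17 (R : realType) (mu : probability cantor R) (i j : nat)
    (t : R) (ht : 0 <= t) :
  ('E_mu[fun w => expR (t * ((X i w - pE mu i) - (X j w - pE mu j)))]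
    <= (subg_bound t (pE mu i + pE mu j - 2 * rE mu i j))%:E)%E.
Proof.
rewrite (@expectation_pair _ mu i j
  (fun x y => expR (t * ((x%:R - pE mu i) - (y%:R - pE mu j)))) (fun _ _ => expR_ge0 _)).
rewrite lee_fin !big_bool /= rE_pair (pE_pair_fst mu i j) (pE_pair_snd mu i j).
have := sum_pair_prob mu i j; have ge0 := pair_prob_ge0 mu i j.
move: (ge0 true true) (ge0 true false) (ge0 false true) (ge0 false false).
set r := pair_prob _ _ _ true true; set a := pair_prob _ _ _ true false.
set b := pair_prob _ _ _ false true; set d := pair_prob _ _ _ false false.
move=> r0 a0 b0 d0 total.
have -> : r + a + (r + b) - 2 * r = a + b by ring.
apply: le_trans (ternary_mgf_le_subg_bound a0 b0 _ ht); last lra.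
rewrite [leLHS](_ : _ = ternary_mgf a b t) //.
have shift x y : t * (x - (r + a) - (y - (r + b))) = - (t * (a - b)) + t * (x - y).
  by ring.
rewrite /ternary_mgf !shift !expRD !(subrr, subr0, sub0r, mulr0, mulr1, mulrN1, expR0).
rewrite (_ : 1 - (a + b) = r + d); last lra.
ring.
Qed.
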